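(* For every series-parallel digraph $D$, the quantity $\phi(D)$ takes the same value for every binary decomposition tree of $D$.
   Context: A series-parallel digraph with source $s$ and sink $t$ is either a single arc from $s$ to $t$, or a series composition $D'\circ D''$ (identify the sink of $D'$ with the source of $D''$), or a parallel composition $D'\parallel D''$ (identify the two sources and the two sinks) of two series-parallel digraphs; parallel arcs are allowed. A binary decomposition tree of $D$ is a rooted binary tree whose leaves correspond bijectively to the arcs of $D$ and each internal vertex is labeled $S$ or $P$ and represents the series, respectively parallel, composition of the graphs of its two children, the root representing $D$. An $S$-component is a maximal connected set of tree vertices labeled $S$. For a given binary decomposition tree, $\phi(D)$ is defined as the maximum, over all root-to-leaf paths, of the number of distinct $S$-components the path traverses. *)

From mathcomp Require Import all_boot.
Set Implicit Arguments. Unset Strict Implicit. Unset Printing Implicit Defensive.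

(* A series-parallel digraph D is given concretely by a finite vertex type V,
   a finite arc type E (parallel arcs allowed), endpoint maps tail/head, and a
   source s and sink t. *)

Inductive sptree (E : Type) : Type :=
| Leaf of E
| SNode of sptree E & sptree E
| PNode of sptree E & sptree E.

Arguments Leaf {E}.
Arguments SNode {E}.
Arguments PNode {E}.

Section Trees.
Variables (V E : finType) (tail head : E -> V).

Fixpoint leaves (T : sptree E) : seq E :=
  match T with
  | Leaf e => [:: e]
  | SNode a b => leaves a ++ leaves b
  | PNode a b => leaves a ++ leaves b
  end.

Definition verts (T : sptree E) : seq V :=
  flatten [seq [:: tail e; head e] | e <- leaves T].

(* [realizes T u v]: the arcs of T (with their endpoints in D) form exactly the
   graph obtained by the compositions of T, with source u and sink v:
   - a leaf is a single arc from u to v (u <> v);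
   - a series node glues the graphs of its children, which share only the
     identified vertex (sink of the first = source of the second);
   - a parallel node glues the graphs of its children, which share only the
     common source and sink. *)
Fixpoint realizes (T : sptree E) (u v : V) : Prop :=
  match T with
  | Leaf e => tail e = u /\ head e = v /\ u <> v
  | SNode a b => exists w, realizes a u w /\ realizes b w v /\
      (forall x, x \in verts a -> x \in verts b -> x = w)
  | PNode a b => realizes a u v /\ realizes b u v /\
      (forall x, x \in verts a -> x \in verts b -> x = u \/ x = v)
  end.

Definition is_dtree (s t : V) (T : sptree E) : Prop :=
  perm_eq (leaves T) (enum E) /\ realizes T s t /\ (forall x : V, x \in verts T).

End Trees.

(* For each root-to-leaf path, the sequence of labels of the internal vertices
   traversed, from the root downwards (true = S, false = P). *)
Fixpoint paths (E : Type) (T : sptree E) : seq (seq bool) :=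
  match T with
  | Leaf _ => [:: [::]]
  | SNode a b => [seq true :: p | p <- paths a ++ paths b]
  | PNode a b => [seq false :: p | p <- paths a ++ paths b]
  end.

(* Number of distinct S-components traversed by a downward path with label
   sequence p: the S-vertices on the path split into maximal runs of
   consecutive S-vertices, each run being the intersection of the path with
   one S-component; we count the starts of such runs. [prev] = label of the
   previous vertex (false at the root). *)
Fixpoint ncomp_from (prev : bool) (p : seq bool) : nat :=
  match p with
  | [::] => 0
  | b :: q => (b && ~~ prev) + ncomp_from b q
  end.

Definition ncomp (p : seq bool) : nat := ncomp_from false p.

Definition phi (E : Type) (T : sptree E) : nat := \max_(p <- paths T) ncomp p.

From mathcomp Require Import all_boot.
Set Implicit Arguments. Unset Strict Implicit. Unset Printing Implicit Defensive.

(* phi is computed bottom-up: [phi_from b T] is the maximum of [ncomp_from b]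
   over the downward paths of [T], so an S-node adds one exactly when its parent
   is not an S-node.  Two decomposition trees of the same digraph have roots of
   the same kind: the middle vertex of a series composition is a cut vertex,
   whereas the branches of a parallel composition meet only at the source and
   the sink, which the arcs of a series composition cannot do.  If both roots are
   S, the middle vertex w of the second tree is a cut vertex of the graph, and
   the first tree re-associates at w into two trees with the arc sets of the
   children of the second one, without changing [phi_from true].  If both roots
   are P, the first tree regroups its parallel branches according to the arc
   sets of the two children of the second one, without changing
   [phi_from false]. *)

Lemma perm_catl_sub (T : eqType) (s1 s2 s : seq T) :
  perm_eq (s1 ++ s2) s -> {subset s1 <= s}.
Proof. by move=> /perm_mem H x xs1; rewrite -H mem_cat xs1. Qed.

Lemma perm_catr_sub (T : eqType) (s1 s2 s : seq T) :
  perm_eq (s1 ++ s2) s -> {subset s2 <= s}.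
Proof. by move=> /perm_mem H x xs2; rewrite -H mem_cat xs2 orbT. Qed.

Lemma mem_cat_uniqr (T : eqType) (s1 s2 : seq T) x : uniq (s1 ++ s2) ->
  (x \in s2) = (x \in s1 ++ s2) && (x \notin s1).
Proof.
rewrite cat_uniq mem_cat => /and3P [_ /hasPn H _].
case: (boolP (x \in s1)) => [xs1|_]; last by rewrite andbT.
by rewrite andbF (negbTE (contraL (H x) xs1)).
Qed.

Lemma uniq_cat_eq_memr (T : eqType) (s1 s2 t1 t2 : seq T) :
  uniq (s1 ++ s2) -> uniq (t1 ++ t2) -> s1 ++ s2 =i t1 ++ t2 -> s1 =i t1 -> s2 =i t2.
Proof. by move=> us ut st st1 x; rewrite (mem_cat_uniqr x us) (mem_cat_uniqr x ut) st st1. Qed.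

Fixpoint phi_from (E : Type) (prev : bool) (T : sptree E) : nat :=
  match T with
  | Leaf _ => 0
  | SNode a c => ~~ prev + maxn (phi_from true a) (phi_from true c)
  | PNode a c => maxn (phi_from false a) (phi_from false c)
  end.

Lemma paths_nonempty (E : Type) (T : sptree E) : ~~ nilp (paths T).
Proof.
rewrite /nilp -lt0n.
by elim: T => [e|a IHa c _|a IHa c _] //=; rewrite size_map size_cat addn_gt0 IHa.
Qed.

Lemma bigmax_addl (I : Type) (k : nat) (h : I -> nat) (s : seq I) :
  ~~ nilp s -> \max_(i <- s) (k + h i) = k + \max_(i <- s) h i.
Proof.
elim: s => // x s IH _; rewrite !big_cons.
by case: s IH => [|y s] IH; rewrite ?big_nil ?maxn0 // IH // addn_maxr.
Qed.

Lemma bigmax_ncomp_from (E : Type) (b : bool) (T : sptree E) :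
  \max_(p <- paths T) ncomp_from b p = phi_from b T.
Proof.
elim: T b => [e|a IHa c IHc|a IHa c IHc] b /=; first by rewrite big_seq1.
  by rewrite big_map big_cat /= !bigmax_addl ?paths_nonempty // IHa IHc -addn_maxr.
by rewrite big_map big_cat /= IHa IHc.
Qed.

Lemma phiE (E : Type) (T : sptree E) : phi T = phi_from false T.
Proof. exact: bigmax_ncomp_from. Qed.

Lemma phi_from_SNode (E : Type) (b : bool) (a c : sptree E) :
  phi_from b (SNode a c) = ~~ b + phi_from true (SNode a c).
Proof. by []. Qed.

Lemma phi_from_PNode (E : Type) (b : bool) (a c : sptree E) :
  phi_from b (PNode a c) = phi_from false (PNode a c).
Proof. by []. Qed.

Lemma size_leaves_gt0 (E : finType) (T : sptree E) : 0 < size (leaves T).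
Proof. by elim: T => //= a IHa c _; rewrite size_cat addn_gt0 IHa. Qed.

Lemma size_leaves_cat_gt1 (E : finType) (a b : sptree E) : 1 < size (leaves a ++ leaves b).
Proof. by rewrite size_cat -[2]/(1 + 1) leq_add ?size_leaves_gt0. Qed.

Lemma perm_leaves_size (E : finType) (A B : sptree E) (s : seq E) n :
  perm_eq (leaves A ++ leaves B) s -> size s <= n.+1 ->
  size (leaves A) <= n /\ size (leaves B) <= n.
Proof.
move=> /perm_size <-; rewrite size_cat => sz.
have A0 := size_leaves_gt0 A; have B0 := size_leaves_gt0 B.
split; rewrite -ltnS; apply: leq_trans sz.
  by rewrite -[X in X < _]addn0 ltn_add2l.
by rewrite -[X in X < _]add0n ltn_add2r.
Qed.

Section Realizations.
Variables (V E : finType) (tail head : E -> V).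

(** * Arc sets and reachability *)

Definition arc_ends (X : seq E) : seq V := flatten [seq [:: tail e; head e] | e <- X].

Lemma arc_ends_cat X1 X2 : arc_ends (X1 ++ X2) = arc_ends X1 ++ arc_ends X2.
Proof. by rewrite /arc_ends map_cat flatten_cat. Qed.

Lemma arc_endsP p X :
  reflect (exists2 e, e \in X & p = tail e \/ p = head e) (p \in arc_ends X).
Proof.
elim: X => [|e X IH] /=; first by apply: (iffP idP) => // [[]].
rewrite -/(arc_ends X) !inE orbA.
apply: (iffP orP) => [[/orP [] /eqP pe | /IH [f fX pf]]|[f]].
- by exists e; rewrite ?inE ?eqxx //; left.
- by exists e; rewrite ?inE ?eqxx //; right.
- by exists f; rewrite // inE fX orbT.
rewrite inE => /orP [/eqP -> [] ->|fX pf]; rewrite ?eqxx ?orbT; [by left|by left|].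
by right; apply/IH; exists f.
Qed.

Lemma arc_ends_sub X1 X2 : {subset X1 <= X2} -> {subset arc_ends X1 <= arc_ends X2}.
Proof. by move=> sX p /arc_endsP [e /sX eX pe]; apply/arc_endsP; exists e. Qed.

Lemma tail_arc_ends e X : e \in X -> tail e \in arc_ends X.
Proof. by move=> eX; apply/arc_endsP; exists e => //; left. Qed.

Lemma head_arc_ends e X : e \in X -> head e \in arc_ends X.
Proof. by move=> eX; apply/arc_endsP; exists e => //; right. Qed.

Definition arc_rel (X : seq E) : rel V :=
  fun p q => has (fun e => (tail e == p) && (head e == q)) X.

Definition reach (X : seq E) : rel V := connect (arc_rel X).

Lemma reach_arc X e : e \in X -> reach X (tail e) (head e).
Proof. by move=> eX; apply/connect1/hasP; exists e; rewrite ?eqxx. Qed.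

Lemma reach_sub X Y p q : {subset X <= Y} -> reach X p q -> reach Y p q.
Proof.
move=> sXY; apply: connect_sub => a b /hasP [e /sXY eY H].
by apply/connect1/hasP; exists e.
Qed.

Lemma reach_forward_closed X (S : pred V) p q :
  (forall e, e \in X -> S (tail e) -> S (head e)) -> S p -> reach X p q -> S q.
Proof.
move=> cl Sp /connectP [s pth ->]; elim: s p Sp pth => //= r s IH p Sp /andP [st pth].
apply: IH pth; case/hasP: st => e eX /andP [/eqP tp /eqP <-].
by apply: cl; rewrite ?tp.
Qed.

Lemma reach_restrict_closed X Y (S : pred V) p q :
  (forall e, e \in X -> S (tail e) -> S (head e) /\ e \in Y) -> S p ->
  reach X p q -> reach Y p q.
Proof.
move=> cl Sp /connectP [s pth ->]; elim: s p Sp pth => /= [|r s IH] p Sp.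
  by move=> _; apply: connect0.
case/andP => /hasP [e eX /andP [/eqP tp /eqP hr]] pth.
have [Sh eY] : S (head e) /\ e \in Y by apply: cl; rewrite ?tp.
apply: connect_trans (IH r _ pth); last by rewrite -hr.
by rewrite -tp -hr; apply: reach_arc.
Qed.

Lemma reach_restrict_outside X Y (S : pred V) p q :
  (forall e, e \in X -> S (tail e) -> S (head e)) ->
  (forall e, e \in X -> ~~ S (tail e) -> e \in Y) -> ~~ S q ->
  reach X p q -> reach Y p q.
Proof.
move=> cl out Sq /connectP [s pth qe]; elim: s p pth qe => /= [|r s IH] p.
  by move=> _ ->; apply: connect0.
case/andP => st pth qe; case/hasP: (st) => e eX /andP [/eqP tp /eqP hr].
have Sp : ~~ S p.
  apply: contra Sq => Sp; apply: (reach_forward_closed cl Sp).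
  by apply/connectP; exists (r :: s); rewrite //= st.
have eY : e \in Y by apply: out; rewrite ?tp.
apply: connect_trans (IH r pth qe).
by rewrite -tp -hr; apply: reach_arc.
Qed.

Section LinkConstant.
Variables (X : seq E) (Q : pred E).
Hypothesis QX : {in X &, forall e1 e2, head e1 = tail e2 -> Q e1 = Q e2}.

Lemma reach_link_const_head e z : e \in X -> reach X (head e) z ->
  exists2 e', e' \in X & head e' = z /\ Q e' = Q e.
Proof.
move=> eX /connectP [s pth ->]; elim: s e eX pth => /= [|r s IH] e eX.
  by exists e.
case/andP => /hasP [g gX /andP [/eqP tg /eqP hg]] pth.
rewrite -hg in pth *; have [e' e'X [he' Qe']] := IH g gX pth.
by exists e'; rewrite // Qe' (QX eX gX).
Qed.

Lemma reach_link_const_tail e z : e \in X -> reach X z (tail e) ->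
  exists2 e', e' \in X & tail e' = z /\ Q e' = Q e.
Proof.
move=> eX /connectP [s pth te]; elim: s z pth te => /= [|r s IH] z.
  by move=> _ <-; exists e.
case/andP => /hasP [g gX /andP [/eqP tg /eqP hg]] pth te.
have [e' e'X [te' <-]] := IH r pth te.
by exists g; rewrite // (QX gX e'X) // hg te'.
Qed.

End LinkConstant.

Lemma reach_catl X Y p q : reach X p q -> reach (X ++ Y) p q.
Proof. by apply: reach_sub => e eX; rewrite mem_cat eX. Qed.

Lemma reach_catr X Y p q : reach Y p q -> reach (X ++ Y) p q.
Proof. by apply: reach_sub => e eY; rewrite mem_cat eY orbT. Qed.

Local Notation rz := (realizes tail head).

Lemma realizes_ends T u v : rz T u v ->
  u \in arc_ends (leaves T) /\ v \in arc_ends (leaves T).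
Proof.
elim: T u v => [e|c IHc d IHd|c IHc d IHd] u v /=.
- by case=> <- [<- _]; rewrite !inE !eqxx ?orbT.
- case=> m [/IHc [uc _] [/IHd [_ vd] _]].
  by rewrite arc_ends_cat !mem_cat uc vd orbT.
- by case=> [/IHc [uc vc] _]; rewrite arc_ends_cat !mem_cat uc vc.
Qed.

Lemma realizes_neq T u v : rz T u v -> u <> v.
Proof.
elim: T u v => [e|c IHc d IHd|c IHc d IHd] u v /=.
- by case=> _ [_].
- case=> m [rc [rd dj]] uv; subst v.
  apply: (IHc u m rc); apply: dj; [exact: (realizes_ends rc).1|].
  exact: (realizes_ends rd).2.
- by case=> [/IHc].
Qed.

Lemma realizes_head_neq_source T u v e : rz T u v -> e \in leaves T -> head e <> u.
Proof.
elim: T u v => [f|c IHc d IHd|c IHc d IHd] u v /=.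
- by case=> <- [<- uv]; rewrite inE => /eqP -> /esym.
- case=> m [rc [rd dj]]; rewrite mem_cat => /orP [ec|ed]; first exact: IHc rc ec.
  move=> hu; apply: (IHd m v rd ed); rewrite hu; apply: dj.
    exact: (realizes_ends rc).1.
  by rewrite -hu; apply: head_arc_ends.
- by case=> [rc [rd _]]; rewrite mem_cat => /orP [ec|ed]; [exact: IHc rc ec|exact: IHd rd ed].
Qed.

Lemma realizes_tail_neq_sink T u v e : rz T u v -> e \in leaves T -> tail e <> v.
Proof.
elim: T u v => [f|c IHc d IHd|c IHc d IHd] u v /=.
- by case=> <- [<- uv]; rewrite inE => /eqP ->.
- case=> m [rc [rd dj]]; rewrite mem_cat => /orP [ec|ed]; last exact: IHd rd ed.
  move=> tv; apply: (IHc u m rc ec); rewrite tv; apply: dj.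
    by rewrite -tv; apply: tail_arc_ends.
  exact: (realizes_ends rd).2.
- by case=> [rc [rd _]]; rewrite mem_cat => /orP [ec|ed]; [exact: IHc rc ec|exact: IHd rd ed].
Qed.

Lemma realizes_source_arc T u v : rz T u v -> exists2 e, e \in leaves T & tail e = u.
Proof.
elim: T u v => [f|c IHc d IHd|c IHc d IHd] u v /=.
- by case=> <- _; exists f; rewrite ?inE.
- by case=> m [/IHc [e ec <-] _]; exists e; rewrite // mem_cat ec.
- by case=> [/IHc [e ec <-] _]; exists e; rewrite // mem_cat ec.
Qed.

Lemma realizes_sink_arc T u v : rz T u v -> exists2 e, e \in leaves T & head e = v.
Proof.
elim: T u v => [f|c IHc d IHd|c IHc d IHd] u v /=.
- by case=> _ [<- _]; exists f; rewrite ?inE.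
- by case=> m [_ [/IHd [e ed <-] _]]; exists e; rewrite // mem_cat ed orbT.
- by case=> [/IHc [e ec <-] _]; exists e; rewrite // mem_cat ec.
Qed.

Lemma realizes_reach_sink T u v e : rz T u v -> e \in leaves T ->
  reach (leaves T) (head e) v.
Proof.
elim: T u v e => [f|c IHc d IHd|c IHc d IHd] u v e /=.
- by case=> _ [<- _]; rewrite inE => /eqP ->; apply: connect0.
- case=> m [rc [rd _]]; rewrite mem_cat => /orP [ec|ed]; last exact/reach_catr/(IHd _ _ _ rd ed).
  have [f fd tf] := realizes_source_arc rd.
  have := IHc _ _ _ rc ec; rewrite -tf => /(reach_catl (leaves d)) /connect_trans; apply.
  apply: (connect_trans (reach_arc (_ : f \in leaves c ++ leaves d))); first by rewrite mem_cat fd orbT.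
  exact/reach_catr/(IHd _ _ _ rd fd).
- case=> [rc [rd _]]; rewrite mem_cat => /orP [ec|ed].
    exact/reach_catl/(IHc _ _ _ rc ec).
  exact/reach_catr/(IHd _ _ _ rd ed).
Qed.

Lemma realizes_reach_source T u v e : rz T u v -> e \in leaves T ->
  reach (leaves T) u (tail e).
Proof.
elim: T u v e => [f|c IHc d IHd|c IHc d IHd] u v e /=.
- by case=> <- _; rewrite inE => /eqP ->; apply: connect0.
- case=> m [rc [rd _]]; rewrite mem_cat => /orP [ec|ed]; first exact/reach_catl/(IHc _ _ _ rc ec).
  have [f fc hf] := realizes_sink_arc rc.
  have := IHd _ _ _ rd ed; rewrite -hf => /(reach_catr (leaves c)); apply: connect_trans.
  apply: (connect_trans (reach_catl _ (IHc _ _ _ rc fc))).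
  by apply: reach_arc; rewrite mem_cat fc.
- case=> [rc [rd _]]; rewrite mem_cat => /orP [ec|ed].
    exact/reach_catl/(IHc _ _ _ rc ec).
  exact/reach_catr/(IHd _ _ _ rd ed).
Qed.

(** * Splitting a realization *)

(* Arcs in [Q] and arcs outside [Q] can only meet at [u] or [v]. *)
Definition locally_const (Q : pred E) (X : seq E) (u v : V) :=
  {in X &, forall e1 e2, head e1 = tail e2 -> head e1 <> u -> head e1 <> v ->
    Q e1 = Q e2}.

Lemma locally_const_sub Q X1 X2 u v : {subset X1 <= X2} ->
  locally_const Q X2 u v -> locally_const Q X1 u v.
Proof. by move=> sX lc e1 e2 /sX e1X /sX e2X; apply: lc. Qed.

Lemma series_locally_const c d u v (Q : pred E) : rz (SNode c d) u v ->
  locally_const Q (leaves c ++ leaves d) u v ->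
  all Q (leaves c ++ leaves d) \/ all (predC Q) (leaves c ++ leaves d).
Proof.
case=> m [rc [rd dj]] lc.
have inc e : e \in leaves c -> e \in leaves c ++ leaves d by rewrite mem_cat => ->.
have ind e : e \in leaves d -> e \in leaves c ++ leaves d by rewrite mem_cat orbC => ->.
have mu : m <> u by move/esym/(realizes_neq rc).
have mv : m <> v by apply: (realizes_neq rd).
have [uc _] := realizes_ends rc; have [_ vd] := realizes_ends rd.
have Qm e1 e2 : e1 \in leaves c -> e2 \in leaves d -> head e1 = m -> tail e2 = m ->
    Q e1 = Q e2.
  by move=> e1c e2d h1 t2; apply: (lc _ _ (inc _ e1c) (ind _ e2d)); rewrite h1 ?t2.
have Qc : {in leaves c &, forall e1 e2, head e1 = tail e2 -> Q e1 = Q e2}.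
  move=> e1 e2 e1c e2c ht; apply: (lc _ _ (inc _ e1c) (inc _ e2c) ht).
    exact: realizes_head_neq_source rc e1c.
  move=> hv; apply: mv; rewrite -hv; apply/esym/dj; first exact: head_arc_ends.
  by rewrite hv.
have Qd : {in leaves d &, forall e1 e2, head e1 = tail e2 -> Q e1 = Q e2}.
  move=> e1 e2 e1d e2d ht; apply: (lc _ _ (ind _ e1d) (ind _ e2d) ht).
    move=> hu; apply: (realizes_head_neq_source rd e1d); rewrite hu.
    by apply: dj; rewrite // -hu; apply: head_arc_ends.
  by rewrite ht; apply: realizes_tail_neq_sink rd e2d.
have [f0 f0d t0] := realizes_source_arc rd.
have Qf0 e : e \in leaves c ++ leaves d -> Q e = Q f0.
  rewrite mem_cat => /orP [ec|ed].
    have [e' e'c [he' <-]] := reach_link_const_head Qc ec (realizes_reach_sink rc ec).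
    exact: Qm.
  have [e' e'd [te' <-]] := reach_link_const_tail Qd ed (realizes_reach_source rd ed).
  have [e0 e0c h0] := realizes_sink_arc rc.
  by rewrite -(Qm e0 e' e0c e'd h0 te') (Qm e0 f0 e0c f0d h0 t0).
by case Q0 : (Q f0); [left|right]; apply/allP => e /Qf0 /=; rewrite Q0 => ->.
Qed.

Lemma parallel_locally_const a b u v X : rz (PNode a b) u v ->
  X =i leaves a ++ leaves b -> locally_const [in leaves a] X u v.
Proof.
case=> _ [_ dj] XE e1 e2; rewrite !XE !mem_cat /= => e1X e2X ht hu hv.
have shared : head e1 \in arc_ends (leaves a) -> head e1 \in arc_ends (leaves b) -> False.
  by move=> pa pb; case: (dj _ pa pb).
case: (boolP (e1 \in leaves a)) => e1a; case: (boolP (e2 \in leaves a)) => e2a //; exfalso.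
  move: e2X; rewrite (negbTE e2a) /= => e2b.
  by apply: shared; [exact: head_arc_ends|rewrite ht; exact: tail_arc_ends].
move: e1X; rewrite (negbTE e1a) /= => e1b.
by apply: shared; [rewrite ht; exact: tail_arc_ends|exact: head_arc_ends].
Qed.

Lemma series_not_parallel a1 b1 a2 b2 u v :
  rz (SNode a1 b1) u v -> rz (PNode a2 b2) u v -> uniq (leaves a2 ++ leaves b2) ->
  leaves a1 ++ leaves b1 =i leaves a2 ++ leaves b2 -> False.
Proof.
move=> rs rp un XE; have [ra [rb _]] := rp.
have [ea eaa _] := realizes_source_arc ra; have [eb ebb _] := realizes_source_arc rb.
move: un; rewrite cat_uniq => /and3P [_ /hasPn /(_ eb ebb) eba _].
case: (series_locally_const rs (parallel_locally_const rp XE)) => /allP H.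
  by have := H eb; rewrite XE mem_cat ebb orbT /= => /(_ isT); rewrite (negbTE eba).
by have := H ea; rewrite XE mem_cat eaa /= => /(_ isT); rewrite eaa.
Qed.

Definition oleaves (o : option (sptree E)) := if o is Some T then leaves T else [::].
Definition ophi (o : option (sptree E)) := if o is Some T then phi_from false T else 0.
Definition orealizes (o : option (sptree E)) u v := if o is Some T then rz T u v else True.

Definition opar (o1 o2 : option (sptree E)) :=
  match o1, o2 with
  | Some T1, Some T2 => Some (PNode T1 T2)
  | Some _, None => o1
  | None, _ => o2
  end.

Lemma oleaves_opar o1 o2 : oleaves (opar o1 o2) = oleaves o1 ++ oleaves o2.
Proof. by case: o1 o2 => [T1|] [T2|] //=; rewrite cats0. Qed.

Lemma ophi_opar o1 o2 : ophi (opar o1 o2) = maxn (ophi o1) (ophi o2).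
Proof. by case: o1 o2 => [T1|] [T2|] //=; rewrite ?maxn0 ?max0n. Qed.

Lemma orealizes_opar o1 o2 u v : orealizes o1 u v -> orealizes o2 u v ->
  (forall p, p \in arc_ends (oleaves o1) -> p \in arc_ends (oleaves o2) -> p = u \/ p = v) ->
  orealizes (opar o1 o2) u v.
Proof. by case: o1 o2 => [T1|] [T2|]. Qed.

Lemma oleaves_some o (T : sptree E) : oleaves o =i leaves T ->
  exists2 T', o = Some T' & leaves T' =i leaves T.
Proof.
case: o => [T'|] /= H; first by exists T'.
by have := size_leaves_gt0 T; case: (leaves T) H => // e s /(_ e); rewrite inE eqxx.
Qed.

(* [oQ] and [oN] regroup the arcs of [T] in, resp. outside, [Q] into parallel
   compositions from [u] to [v]; [None] stands for an empty one. *)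
Definition parallel_split T u v (Q : pred E) oQ oN :=
  [/\ orealizes oQ u v /\ orealizes oN u v,
      perm_eq (oleaves oQ ++ oleaves oN) (leaves T),
      all Q (oleaves oQ) /\ all (predC Q) (oleaves oN),
      (forall p, p \in arc_ends (oleaves oQ) -> p \in arc_ends (oleaves oN) ->
         p = u \/ p = v) &
      phi_from false T = maxn (ophi oQ) (ophi oN)].

Lemma trivial_parallel_split T u v (Q : pred E) : rz T u v ->
  all Q (leaves T) \/ all (predC Q) (leaves T) ->
  exists oQ oN, parallel_split T u v Q oQ oN.
Proof.
move=> r [H|H]; first by exists (Some T), None; split; rewrite //= ?cats0 ?maxn0.
by exists None, (Some T); split; rewrite //= max0n.
Qed.

Lemma exists_parallel_split T u v (Q : pred E) : rz T u v ->
  locally_const Q (leaves T) u v -> exists oQ oN, parallel_split T u v Q oQ oN.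
Proof.
elim: T u v => [e|c _ d _|c IHc d IHd] u v r lc.
- by apply: trivial_parallel_split => //=; rewrite !andbT /=; case: (Q e); [left|right].
- exact/(trivial_parallel_split r)/(series_locally_const r).
case: r => rc [rd dj].
have [cQ [cN [[rcQ rcN] pc [acQ acN] djc phic]]] :
    exists oQ oN, parallel_split c u v Q oQ oN.
  by apply: IHc rc _; apply: locally_const_sub lc => e ec; rewrite mem_cat ec.
have [dQ [dN [[rdQ rdN] pd [adQ adN] djd phid]]] :
    exists oQ oN, parallel_split d u v Q oQ oN.
  by apply: IHd rd _; apply: locally_const_sub lc => e ed; rewrite mem_cat ed orbT.
have cross o1 o2 : {subset oleaves o1 <= leaves c} -> {subset oleaves o2 <= leaves d} ->
    forall p, p \in arc_ends (oleaves o1) -> p \in arc_ends (oleaves o2) -> p = u \/ p = v.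
  by move=> s1 s2 p /(arc_ends_sub s1) h1 /(arc_ends_sub s2); apply: dj.
have [cQc cNc] := (perm_catl_sub pc, perm_catr_sub pc).
have [dQd dNd] := (perm_catl_sub pd, perm_catr_sub pd).
exists (opar cQ dQ), (opar cN dN); split.
- by split; apply: orealizes_opar => //; apply: cross.
- by rewrite !oleaves_opar /= perm_catACA; apply: perm_cat.
- by rewrite !oleaves_opar !all_cat acQ acN adQ adN.
- move=> p; rewrite !oleaves_opar !arc_ends_cat !mem_cat.
  case/orP=> [h1|h1] /orP [h2|h2]; [exact: djc|exact: cross h1 h2|exact: cross h2 h1|exact: djd].
- by rewrite /= !ophi_opar phic phid maxnACA.
Qed.

Definition cut_vertex (X : seq E) (z : V) :=
  forall e, e \in X -> reach X (head e) z || reach X z (tail e).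

Lemma parallel_no_cut_vertex c d u v X z : rz c u v -> rz d u v ->
  (forall p, p \in arc_ends (leaves c) -> p \in arc_ends (leaves d) -> p = u \/ p = v) ->
  X =i leaves c ++ leaves d -> cut_vertex X z -> z \in arc_ends (leaves c) ->
  z <> u -> z <> v -> False.
Proof.
move=> rc rd dj XE ct zc zu zv.
have [f fd tf] := realizes_source_arc rd.
have no_arc_into_u e : e \in X -> head e != u.
  by rewrite XE mem_cat => /orP [ec|ed]; apply/eqP;
    [exact: realizes_head_neq_source rc ec|exact: realizes_head_neq_source rd ed].
have fX : f \in X by rewrite XE mem_cat fd orbT.
case/orP: (ct f fX) => R.
  pose S p := (p \in arc_ends (leaves d)) && (p != u).
  have /andP [zd _] : S z.
    apply: (reach_forward_closed _ _ R); last by rewrite /S (head_arc_ends fd) no_arc_into_u.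
    move=> e eX /andP [td tu]; rewrite /S no_arc_into_u // andbT.
    move: eX; rewrite XE mem_cat => /orP [ec|]; last exact: head_arc_ends.
    case: (dj _ (tail_arc_ends ec) td) => [/eqP|/(realizes_tail_neq_sink rc ec)] //.
    by rewrite (negbTE tu).
  by case: (dj z zc zd).
have : u != u.
  rewrite -{1}tf; apply: (reach_forward_closed (S := fun p => p != u) _ _ R).
    by move=> e eX _; apply: no_arc_into_u.
  exact/eqP.
by rewrite eqxx.
Qed.

Section SeriesComposition.
Variables (c d : sptree E) (u m : V).
Hypothesis rc : rz c u m.
Hypothesis dj : forall p,
  p \in arc_ends (leaves c) -> p \in arc_ends (leaves d) -> p = m.

Lemma series_tail_right e : e \in leaves c ++ leaves d ->
  tail e \in arc_ends (leaves d) -> e \in leaves d.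
Proof.
rewrite mem_cat => /orP [ec td|//].
by case: (realizes_tail_neq_sink rc ec); apply: dj => //; apply: tail_arc_ends.
Qed.

Lemma cut_vertex_seriesl z : cut_vertex (leaves c ++ leaves d) z ->
  z \in arc_ends (leaves c) -> z <> m -> cut_vertex (leaves c) z.
Proof.
move=> ct zc zm e ec.
pose S p := p \in arc_ends (leaves d).
have cl e' : e' \in leaves c ++ leaves d -> S (tail e') -> S (head e').
  by move/series_tail_right => e'd /e'd; apply: head_arc_ends.
have out e' : e' \in leaves c ++ leaves d -> ~~ S (tail e') -> e' \in leaves c.
  by rewrite mem_cat => /orP [//|/tail_arc_ends]; rewrite /S => ->.
have zd : ~~ S z by apply/negP => /(dj zc).
have ted : ~~ S (tail e).
  by apply/negP => /(dj (tail_arc_ends ec)) /(realizes_tail_neq_sink rc ec).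
have eX : e \in leaves c ++ leaves d by rewrite mem_cat ec.
by case/orP: (ct e eX) => R; apply/orP; [left|right];
  apply: (reach_restrict_outside cl out _ R).
Qed.

Lemma cut_vertex_seriesr z : cut_vertex (leaves c ++ leaves d) z ->
  z \in arc_ends (leaves d) -> cut_vertex (leaves d) z.
Proof.
move=> ct zd e ed.
pose S p := p \in arc_ends (leaves d).
have cl e' : e' \in leaves c ++ leaves d -> S (tail e') -> S (head e') /\ e' \in leaves d.
  by move/series_tail_right => e'd /e'd e'd'; rewrite /S head_arc_ends.
have eX : e \in leaves c ++ leaves d by rewrite mem_cat ed orbT.
by case/orP: (ct e eX) => R; apply/orP; [left|right];
  apply: (reach_restrict_closed cl _ R); rewrite /S ?head_arc_ends.
Qed.

End SeriesComposition.

Lemma series_split T u v z : rz T u v -> cut_vertex (leaves T) z ->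
  z \in arc_ends (leaves T) -> z <> u -> z <> v ->
  exists TL TR, [/\ rz TL u z, rz TR z v,
    (forall p, p \in arc_ends (leaves TL) -> p \in arc_ends (leaves TR) -> p = z),
    perm_eq (leaves TL ++ leaves TR) (leaves T) &
    phi_from true T = maxn (phi_from true TL) (phi_from true TR)].
Proof.
elim: T u v z => [e|c IHc d IHd|c _ d _] u v z.
- by case=> <- [<- _] _; rewrite !inE => /orP [] /eqP ->.
- case=> m [rc [rd dj]] ct; rewrite arc_ends_cat mem_cat => zcd zu zv.
  have [zm|/eqP zm] := eqVneq z m; first by subst z; exists c, d.
  case/orP: zcd => zc.
  + have [cL [cR [rL rR djc pc phic]]] :=
      IHc u m z rc (cut_vertex_seriesl rc dj ct zc zm) zc zu zm.
    have [sL sR] := (arc_ends_sub (perm_catl_sub pc), arc_ends_sub (perm_catr_sub pc)).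
    exists cL, (SNode cR d); split => //.
    * by exists m; split=> //; split=> // p /sR; apply: dj.
    * move=> p pL; rewrite arc_ends_cat mem_cat => /orP [|pd]; first exact: djc.
      have pm : p = m by apply: dj => //; apply: sL.
      by subst p; apply: djc => //; have [] := realizes_ends rR.
    * by rewrite /= catA perm_cat2r.
    * by rewrite /= phic maxnA.
  + have [dL [dR [rL rR djd pd phid]]] :=
      IHd m v z rd (cut_vertex_seriesr rc dj ct zc) zc zm zv.
    have [sL sR] := (arc_ends_sub (perm_catl_sub pd), arc_ends_sub (perm_catr_sub pd)).
    exists (SNode c dL), dR; split => //.
    * by exists m; split=> //; split=> // p pc /sL; apply: dj.
    * move=> p; rewrite arc_ends_cat mem_cat => /orP [pc|]; last exact: djd.
      move=> pR; have pm : p = m by apply: dj => //; apply: sR.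
      by subst p; apply: djd => //; have [] := realizes_ends rL.
    * by rewrite /= -catA perm_cat2l.
    * by rewrite /= phid maxnA.
- case=> rc [rd dj] ct; rewrite arc_ends_cat mem_cat => /orP [zc|zd] zu zv.
    by case: (parallel_no_cut_vertex rc rd dj (fun e => erefl) ct zc zu zv).
  have dj' p : p \in arc_ends (leaves d) -> p \in arc_ends (leaves c) -> p = u \/ p = v.
    by move=> pd pc; apply: dj.
  have XE : leaves c ++ leaves d =i leaves d ++ leaves c.
    by move=> e; rewrite !mem_cat orbC.
  by case: (parallel_no_cut_vertex rd rc dj' XE ct zd zu zv).
Qed.

Lemma series_left_reach L R X u w v e : rz L u w -> rz R w v ->
  (forall p, p \in arc_ends (leaves L) -> p \in arc_ends (leaves R) -> p = w) ->
  X =i leaves L ++ leaves R -> e \in X -> (e \in leaves L) = reach X (head e) w.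
Proof.
move=> rL rR dj XE eX; apply/idP/idP => [eL|Rw].
  by apply: reach_sub (realizes_reach_sink rL eL) => f fL; rewrite XE mem_cat fL.
apply/negPn/negP => eL.
have eR : e \in leaves R by move: eX; rewrite XE mem_cat (negbTE eL).
pose S p := (p \in arc_ends (leaves R)) && (p != w).
suff /andP [_] : S w by rewrite eqxx.
apply: (reach_forward_closed _ _ Rw); last first.
  by rewrite /S head_arc_ends //; apply/eqP/(realizes_head_neq_source rR eR).
move=> f; rewrite XE mem_cat => /orP [fL|fR] /andP [tR tw].
  by rewrite (dj _ (tail_arc_ends fL) tR) eqxx in tw.
by rewrite /S head_arc_ends //; apply/eqP/(realizes_head_neq_source rR fR).
Qed.

(** * Induction on the number of arcs *)

(* Both values of [b] are carried: the series step compares the children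
   through [phi_from true], the parallel step through [phi_from false]. *)
Definition phi_invariant n := forall T1 T2 u v, size (leaves T1) <= n ->
  uniq (leaves T1) -> uniq (leaves T2) -> leaves T1 =i leaves T2 ->
  rz T1 u v -> rz T2 u v -> forall b, phi_from b T1 = phi_from b T2.

Section InductionStep.
Variable n : nat.
Hypothesis IH : phi_invariant n.

Lemma phi_from_children L R a b (s : seq E) :
  perm_eq (leaves L ++ leaves R) s -> size s <= n.+1 -> uniq s ->
  uniq (leaves a ++ leaves b) -> s =i leaves a ++ leaves b -> leaves L =i leaves a ->
  (forall u v, rz L u v -> rz a u v -> forall c, phi_from c L = phi_from c a) /\
  (forall u v, rz R u v -> rz b u v -> forall c, phi_from c R = phi_from c b).
Proof.
move=> pLR sz us uab sE La.
have [szL szR] := perm_leaves_size pLR sz.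
have uLR : uniq (leaves L ++ leaves R) by rewrite (perm_uniq pLR).
have Rb : leaves R =i leaves b.
  by apply: uniq_cat_eq_memr uLR uab _ La => e; rewrite (perm_mem pLR) sE.
move: uLR uab; rewrite !cat_uniq => /and3P [uL _ uR] /and3P [ua _ ub].
split=> u v r r'; [exact: IH szL uL ua La r r'|exact: IH szR uR ub Rb r r'].
Qed.

Lemma phi_from_series_step T1 a2 b2 u v : size (leaves T1) <= n.+1 ->
  uniq (leaves T1) -> uniq (leaves a2 ++ leaves b2) ->
  leaves T1 =i leaves a2 ++ leaves b2 -> rz T1 u v -> rz (SNode a2 b2) u v ->
  phi_from true T1 = phi_from true (SNode a2 b2).
Proof.
move=> sz u1 u2 XE r1 [w [ra [rb dj2]]].
have sub2 : {subset leaves a2 ++ leaves b2 <= leaves T1} by move=> e; rewrite XE.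
have ct : cut_vertex (leaves T1) w.
  move=> e; rewrite XE mem_cat => /orP [ea|eb]; apply/orP; [left|right].
    exact: reach_sub sub2 (reach_catl _ (realizes_reach_sink ra ea)).
  exact: reach_sub sub2 (reach_catr _ (realizes_reach_source rb eb)).
have wT1 : w \in arc_ends (leaves T1).
  by apply: arc_ends_sub sub2 _ _; rewrite arc_ends_cat mem_cat (realizes_ends ra).2.
have wu : w <> u by move=> wu; apply: (realizes_neq ra); rewrite wu.
have [TL [TR [rL rR djLR pLR ->]]] := series_split r1 ct wT1 wu (realizes_neq rb).
have LR : leaves T1 =i leaves TL ++ leaves TR by move=> e; rewrite (perm_mem pLR).
have La : leaves TL =i leaves a2.
  move=> e; case eT1 : (e \in leaves T1).
    by rewrite (series_left_reach rL rR djLR LR eT1) (series_left_reach ra rb dj2 XE eT1).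
  by apply/idP/idP => h; move: eT1; [rewrite LR|rewrite XE]; rewrite mem_cat h.
have [phiL phiR] := phi_from_children pLR sz u1 u2 XE La.
by rewrite /= (phiL _ _ rL ra) (phiR _ _ rR rb).
Qed.

Lemma phi_from_parallel_step T1 a2 b2 u v : size (leaves T1) <= n.+1 ->
  uniq (leaves T1) -> uniq (leaves a2 ++ leaves b2) ->
  leaves T1 =i leaves a2 ++ leaves b2 -> rz T1 u v -> rz (PNode a2 b2) u v ->
  phi_from false T1 = phi_from false (PNode a2 b2).
Proof.
move=> sz u1 u2 XE r1 r2; have [ra [rb _]] := r2.
have [oQ [oN [[rQ rN] pQN [aQ aN] _ ->]]] :=
  exists_parallel_split r1 (parallel_locally_const r2 XE).
have QE : oleaves oQ =i leaves a2.
  move=> e; apply/idP/idP => [/(allP aQ) //|ea].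
  have : e \in leaves T1 by rewrite XE mem_cat ea.
  by rewrite -(perm_mem pQN) mem_cat => /orP [//|/(allP aN)]; rewrite /= ea.
have NE : oleaves oN =i leaves b2.
  apply: uniq_cat_eq_memr QE; rewrite ?(perm_uniq pQN) // => e.
  by rewrite (perm_mem pQN) XE.
have [TQ eQ LQ] := oleaves_some QE; have [TN eN LN] := oleaves_some NE.
subst oQ oN; rewrite /= in rQ rN pQN.
have [phiQ phiN] := phi_from_children pQN sz u1 u2 XE LQ.
by rewrite /= (phiQ _ _ rQ ra) (phiN _ _ rN rb).
Qed.

Lemma phi_invariantS : phi_invariant n.+1.
Proof.
move=> T1 T2 u v sz u1 u2 XE r1 r2.
have size12 : size (leaves T1) = size (leaves T2) by apply/perm_size/uniq_perm.
case: T1 r1 u1 XE sz size12 => [e1|a1 b1|a1 b1] r1 u1 XE sz size12;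
case: T2 r2 u2 XE size12 => [e2|a2 b2|a2 b2] r2 u2 XE size12 b //;
  (* a leaf has fewer arcs than a composition *)
  try by have := size_leaves_cat_gt1 a1 b1; rewrite /= size12.
all: try by have := size_leaves_cat_gt1 a2 b2; rewrite /= -size12.
- by rewrite phi_from_SNode [RHS]phi_from_SNode (phi_from_series_step sz u1 u2 XE r1 r2).
- by case: (series_not_parallel r1 r2 u2 XE).
- by case: (series_not_parallel r2 r1 u1 (fun e => esym (XE e))).
by rewrite phi_from_PNode [RHS]phi_from_PNode (phi_from_parallel_step sz u1 u2 XE r1 r2).
Qed.

End InductionStep.

Lemma phi_invariant_all n : phi_invariant n.
Proof.
elim: n => [|n IH]; last exact: phi_invariantS.
by move=> T1 T2 u v; rewrite leqNgt size_leaves_gt0.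
Qed.

End Realizations.

Theorem mainTheorem11 (V E : finType) (tail head : E -> V) (s t : V)
    (T1 T2 : sptree E) :
  is_dtree tail head s t T1 -> is_dtree tail head s t T2 -> phi T1 = phi T2.
Proof.
case=> p1 [r1 _] [p2 [r2 _]].
have u1 : uniq (leaves T1) by rewrite (perm_uniq p1) enum_uniq.
have u2 : uniq (leaves T2) by rewrite (perm_uniq p2) enum_uniq.
have E12 : leaves T1 =i leaves T2 by move=> e; rewrite (perm_mem p1) (perm_mem p2).
by rewrite !phiE (phi_invariant_all (leqnn _) u1 u2 E12 r1 r2).
Qed.
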